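(* Let $\bar\pi^*$ be an optimal (cost-minimizing) policy for $\bar{\mathcal M}$, with state-action value $\bar Q^*$ and state value $\bar V^*$, and let $\bar A^*(s,a)=\bar Q^*(s,a)-\bar Q^*(s,\bar\pi^* )$. Let $G_0$ be the set of admissible intervention rules $(\bar Q,\mu,0)$ with $\bar Q(d_0,\mu)=\bar V^*(d_0)$. For any $\mathcal G=(\bar Q,\mu,0)\in G_0$ with advantage $\bar A(s,a)=\bar Q(s,a)-\bar Q(s,\mu)$, and any policy $\pi$, let $\pi'=\mathcal G(\pi)$. Then for $d^{\pi'}$-almost every state $s$, $\bar A(s,a)\ge\bar A^*(s,a)$ for all $a\in\mathcal A$.
   Context: $\mathcal M=(\mathcal S,\mathcal A,P,r,\gamma)$ is a discounted MDP with discrete state and action spaces, discount $\gamma\in[0,1)$, initial distribution $d_0$. $\mathcal S$ contains two distinguished states $s_\triangleright,s_\circ$; $\mathcal S_{\mathrm{unsafe}}=\{s_\triangleright,s_\circ\}$, $\mathcal S_{\mathrm{safe}}=\mathcal S\setminus\mathcal S_{\mathrm{unsafe}}$; from $s_\triangleright$ every action leads to $s_\circ$ w.p. 1, $s_\circ$ is absorbing, $d_0(s_\circ)=0$. Cost $c(s,a)=\mathbb 1\{s=s_\triangleright\}$; $\bar{\mathcal M}=(\mathcal S,\mathcal A,P,c,\gamma)$; an optimal policy of $\bar{\mathcal M}$ minimizes expected discounted cost from every state. For $g:\mathcal S\times\mathcal A\to\mathbb R$, $g(s,\mu)=\mathbb E_{a\sim\mu(\cdot|s)}g(s,a)$, $g(d_0,\mu)=\mathbb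 E_{s\sim d_0}g(s,\mu)$. For a policy $\pi$, $d^{\pi}(s)=(1-\gamma)\sum_t\gamma^t\Pr(s_t=s)$ for trajectories of $\pi$ in $\mathcal M$ from $s_0\sim d_0$. Intervention rule: a triple $\mathcal G=(\bar Q,\mu,\eta)$, $\eta\in[0,1]$, backup policy $\mu$, $\bar Q:\mathcal S_{\mathrm{safe}}\times\mathcal A\to[0,1]$ extended by $\bar Q(s_\triangleright,a)=1$, $\bar Q(s_\circ,a)=0$; intervention set $\mathcal I=\{(s,a)\in\mathcal S_{\mathrm{safe}}\times\mathcal A:\bar Q(s,a)-\bar Q(s,\mu)>\eta\}$; shielded policy $\mathcal G(\pi)(a|s)=\pi(a|s)\mathbb 1\{(s,a)\notin\mathcal I\}+w(s)\mu(a|s)$ with $w(s)=\sum_{\tilde a:(s,\tilde a)\in\mathcal I}\pi(\tilde a|s)$. Admissible: for all $s\in\mathcal S_{\mathrm{safe}},a$: $\bar Q(s,a)\in[0,\gamma]$ and $\bar Q(s,a)\ge c(s,a)+\gamma\mathbb E_{s'\sim P(\cdot|s,a)}[\bar Q(s',\mu)]$. *)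

From HB Require Import structures.
From mathcomp Require Import all_boot all_order all_algebra.
From mathcomp Require Import all_classical all_reals.
From mathcomp Require Import ereal topology normedtype sequences esum.
Set Implicit Arguments. Unset Strict Implicit. Unset Printing Implicit Defensive.
Import Order.TTheory GRing.Theory Num.Theory.
Local Open Scope classical_set_scope.
Local Open Scope ring_scope.
Local Open Scope ereal_scope.

Section MDP.
Variables (R : realType) (S A : choiceType).

Definition psum (T : choiceType) (f : T -> \bar R) : \bar R :=
  \esum_(x in [set: T]) f x.

Definition is_dist (T : choiceType) (p : T -> R) : Prop :=
  (forall x, (0 <= p x)%R) /\ psum (fun x => (p x)%:E) = 1.

Definition is_policy (pi : S -> A -> R) : Prop := forall s, is_dist (pi s).

Definition is_kernel (P : S -> A -> S -> R) : Prop :=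
  forall s a, is_dist (P s a).

Definition Epol (pi : S -> A -> R) (s : S) (g : A -> \bar R) : \bar R :=
  psum (fun a => (pi s a)%:E * g a).

Definition Enext (P : S -> A -> S -> R) (s : S) (a : A) (g : S -> \bar R)
  : \bar R := psum (fun s' => (P s a s')%:E * g s').

Definition Edist (d : S -> R) (g : S -> \bar R) : \bar R :=
  psum (fun s => (d s)%:E * g s).

Definition cost (s_tri : S) (s : S) (a : A) : R := if s == s_tri then 1%R else 0%R.

Fixpoint stdist (P : S -> A -> S -> R) (pi : S -> A -> R) (d : S -> \bar R)
  (t : nat) : S -> \bar R :=
  match t with
  | 0%N => d
  | t'.+1 => fun s' => psum (fun s =>
       stdist P pi d t' s * Epol pi s (fun a => (P s a s')%:E))
  end.

Definition dirac_st (s0 : S) : S -> \bar R := fun s => if s == s0 then 1 else 0.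

Definition Vcost (P : S -> A -> S -> R) (gamma : R) (s_tri : S)
  (pi : S -> A -> R) (d : S -> \bar R) : \bar R :=
  \sum_(t <oo) ((gamma ^+ t)%:E *
     psum (fun s => stdist P pi d t s * Epol pi s (fun a => (cost s_tri s a)%:E))).

Definition Vbar P gamma s_tri pi (s : S) : \bar R :=
  Vcost P gamma s_tri pi (dirac_st s).

Definition Qbar P gamma s_tri pi (s : S) (a : A) : \bar R :=
  (cost s_tri s a)%:E + gamma%:E * Enext P s a (Vbar P gamma s_tri pi).

Definition optimal_policy P gamma s_tri (pi : S -> A -> R) : Prop :=
  is_policy pi /\ forall pi', is_policy pi' ->
    forall s, Vbar P gamma s_tri pi s <= Vbar P gamma s_tri pi' s.

Definition occupancy P gamma (pi : S -> A -> R) (d0 : S -> R) (s : S) : \bar R :=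
  (1 - gamma)%:E * \sum_(t <oo) ((gamma ^+ t)%:E *
      stdist P pi (fun x => (d0 x)%:E) t s).

Definition safe (s_tri s_circ s : S) : Prop := s <> s_tri /\ s <> s_circ.

(* extension of Qb : S_safe x A -> [0,1] by Qb(s_tri,.) = 1, Qb(s_circ,.) = 0 *)
Definition Qext (s_tri s_circ : S) (Qb : S -> A -> R) (s : S) (a : A) : R :=
  if s == s_tri then 1%R else if s == s_circ then 0%R else Qb s a.

Definition Qmu s_tri s_circ Qb (mu : S -> A -> R) (s : S) : \bar R :=
  Epol mu s (fun a => (Qext s_tri s_circ Qb s a)%:E).

Definition interv s_tri s_circ Qb mu (eta : R) (s : S) (a : A) : Prop :=
  safe s_tri s_circ s /\
  (Qext s_tri s_circ Qb s a)%:E - Qmu s_tri s_circ Qb mu s > eta%:E.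

Definition shield s_tri s_circ Qb mu eta (pi : S -> A -> R) : S -> A -> R :=
  fun s a =>
    let w := fine (psum (fun a' =>
               (if `[< interv s_tri s_circ Qb mu eta s a' >] then pi s a' else 0%R)%:E)) in
    ((if `[< interv s_tri s_circ Qb mu eta s a >] then 0%R else pi s a)
      + w * mu s a)%R.

Definition admissible P gamma s_tri s_circ (Qb : S -> A -> R) (mu : S -> A -> R)
  : Prop :=
  forall s a, safe s_tri s_circ s ->
    (0 <= Qb s a <= gamma)%R /\
    (cost s_tri s a)%:E + gamma%:E *
       Enext P s a (Qmu s_tri s_circ Qb mu) <= (Qb s a)%:E.

Definition in_G0 P gamma s_tri s_circ d0 (pistar : S -> A -> R)
  (Qb : S -> A -> R) (mu : S -> A -> R) : Prop :=
  is_policy mu /\ admissible P gamma s_tri s_circ Qb mu /\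
  Edist d0 (Qmu s_tri s_circ Qb mu) = Edist d0 (Vbar P gamma s_tri pistar).

End MDP.

(* Shielded policies only visit states where the backup value is optimal.

   Write V* for the optimal value of the cost MDP, Q* for its state-action
   value and U(s) = Qb(s,mu) for the value promised by the intervention rule
   G = (Qb, mu, 0).  The proof has three layers.

   Admissibility makes U a supersolution for mu, so V* <= U,
      V* <= Qb and Q* <= Qb on safe states.  Since E_d0 U = E_d0 V*, U = V* on
      the support of d0, and this equality propagates along every transition
      of the shielded policy: any action it plays at such a state has
      Qb(s,a) <= V*(s), which squeezes E_P U = E_P V*.  Hence U = V* on every
      state of positive occupancy, where A*(s,a) <= Abar(s,a) follows from
      Q* <= Qb and V* <= Q*(s,pistar). *)
From HB Require Import structures.
From mathcomp Require Import all_boot all_order all_algebra.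
From mathcomp Require Import all_classical all_reals.
From mathcomp Require Import ereal topology normedtype sequences esum.
From mathcomp Require Import lra.
Import Order.TTheory GRing.Theory Num.Theory.
Local Open Scope classical_set_scope.
Local Open Scope ring_scope.
Local Open Scope ereal_scope.

Section NonnegativeSums.
Variable R : realType.
Implicit Types (T : choiceType).

Lemma psum_ge0 T (f : T -> \bar R) : (forall i, 0 <= f i) -> 0 <= psum f.
Proof. by move=> f0; apply: esum_ge0 => i _; exact: f0. Qed.

Lemma le_psum T (f g : T -> \bar R) :
  (forall i, f i <= g i) -> psum f <= psum g.
Proof. by move=> fg; apply: le_esum => i _; exact: fg. Qed.

Lemma psumD T (f g : T -> \bar R) :
  (forall i, 0 <= f i) -> (forall i, 0 <= g i) ->
  psum (fun i => f i + g i) = psum f + psum g.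
Proof. by move=> f0 g0; apply: esumD => i _; [exact: f0|exact: g0]. Qed.

Lemma psum_eq0 T (f : T -> \bar R) : (forall i, f i = 0) -> psum f = 0.
Proof. by move=> f0; apply: esum1 => i _; exact: f0. Qed.

Lemma psum_single T (f : T -> \bar R) t :
  (forall i, i <> t -> f i = 0) -> 0 <= f t -> psum f = f t.
Proof.
move=> f0 ft; rewrite /psum (esumID [set t]); last first.
  by move=> i _; have [->//|/eqP/f0->] := eqVneq i t.
rewrite setTI esum_set1// [X in _ + X]esum1 ?adde0// => i [_ /= it].
exact: (f0 i it).
Qed.

Lemma psum_ge_pair T (f : T -> \bar R) x y :
  x <> y -> (forall i, 0 <= f i) -> f x + f y <= psum f.
Proof.
move=> xy f0.
pose at_x i := if i == x then f x else 0.
pose at_y i := if i == y then f y else 0.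
have at_x0 i : 0 <= at_x i by rewrite /at_x; case: ifP.
have at_y0 i : 0 <= at_y i by rewrite /at_y; case: ifP.
have -> : f x + f y = psum (fun i => at_x i + at_y i).
  rewrite psumD // (@psum_single _ at_x x) ?(@psum_single _ at_y y) //.
  - by rewrite /at_x /at_y !eqxx.
  - by move=> i /eqP/negPf; rewrite /at_y => ->.
  - by move=> i /eqP/negPf; rewrite /at_x => ->.
apply: le_psum => i; rewrite /at_x /at_y; have [->|ix] := eqVneq i x.
  by have /eqP/negPf -> := xy; rewrite adde0.
by have [->|iy] := eqVneq i y; rewrite add0e.
Qed.

Lemma psum_gt0 T (f : T -> \bar R) :
  (forall i, 0 <= f i) -> 0 < psum f -> exists i, 0 < f i.
Proof.
move=> f0 pos; apply: contrapT => nex; move: pos.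
suff -> : psum f = 0 by rewrite ltxx.
apply: psum_eq0 => i; apply/eqP; rewrite eq_le f0 andbT leNgt.
by apply/negP => fi; apply: nex; exists i.
Qed.

(* Half of psumZl: finite partial sums already give the upper bound. *)
Lemma psumZl_le T (x : \bar R) (f : T -> \bar R) :
  0 <= x -> (forall i, 0 <= f i) -> psum (fun i => x * f i) <= x * psum f.
Proof.
move=> x0 f0; apply: ge_ereal_sup => _ [X [finX _] <-] /=.
rewrite -ge0_mule_fsumr//; apply: lee_wpmul2l => //.
by apply: ereal_sup_ubound; exists X.
Qed.

Lemma psumZl T (x : \bar R) (f : T -> \bar R) :
  0 <= x -> (forall i, 0 <= f i) -> psum (fun i => x * f i) = x * psum f.
Proof.
move=> x0 f0; apply/eqP; rewrite eq_le psumZl_le //=.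
case: x x0 => [r||] //; rewrite ?lee_fin => r0.
  have [->|rn0] := eqVneq r 0%R.
    by rewrite mul0e; apply: psum_ge0 => i; rewrite mul0e.
  have rp : (0 < r)%R by rewrite lt_def rn0 r0.
  have rf0 i : 0 <= r%:E * f i by apply: mule_ge0 => //; rewrite lee_fin.
  rewrite -(@lee_pmul2l _ (r^-1)%:E) ?lte_fin ?invr_gt0// muleA -EFinM mulVf//.
  rewrite mul1e; apply: le_trans (@psumZl_le _ (r^-1)%:E _ _ rf0); last first.
    by rewrite lee_fin invr_ge0.
  by apply: le_psum => i; rewrite muleA -EFinM mulVf// mul1e.
have [->|fn0] := eqVneq (psum f) 0.
  by rewrite mule0; apply: psum_ge0 => i; apply: mule_ge0.
have fpos : 0 < psum f by rewrite lt_def fn0 psum_ge0.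
have [_ [X [finX _] <-] XP] := ereal_sup_gt fpos.
rewrite gt0_mulye// leye_eq; apply/eqP/eq_infty => y; apply: esum_ge.
by exists X => //; rewrite -ge0_mule_fsumr// gt0_mulye ?leey.
Qed.

Lemma psumZr T (x : \bar R) (f : T -> \bar R) :
  0 <= x -> (forall i, 0 <= f i) -> psum (fun i => f i * x) = psum f * x.
Proof.
move=> x0 f0; rewrite muleC -psumZl//; apply: eq_esum => i _; exact: muleC.
Qed.

Lemma psum_swap (T1 T2 : choiceType) (f : T1 -> T2 -> \bar R) :
  (forall i j, 0 <= f i j) ->
  psum (fun i => psum (fun j => f i j)) = psum (fun j => psum (fun i => f i j)).
Proof.
move=> f0; rewrite /psum !esum_esum; try by move=> i j _ _; exact: f0.
apply: (@reindex_esum R _ _ _ _ (fun x : T2 * T1 => (x.2, x.1))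
   (fun k : T1 * T2 => f k.1 k.2)).
split.
- by move=> [a b] _.
- by move=> [a b] [c d] _ _ /= [-> ->].
- by move=> [a b] _; exists (b, a).
Qed.

Lemma psum_avg_fin T (w : T -> R) (F : T -> \bar R) :
  (forall i, (0 <= w i)%R) -> psum (fun i => (w i)%:E) = 1 ->
  (forall i, 0 <= F i) -> (forall i, F i <= 1) ->
  psum (fun i => (w i)%:E * F i) \is a fin_num.
Proof.
move=> w0 w1 F0 F1; rewrite ge0_fin_numE; last first.
  by apply: psum_ge0 => i; apply: mule_ge0; rewrite ?lee_fin.
apply: (@le_lt_trans _ _ 1); last by rewrite ltry.
rewrite -w1; apply: le_psum => i; rewrite -[X in _ <= X]mule1.
by apply: lee_wpmul2l; rewrite ?lee_fin.
Qed.

Lemma psum_avg_lt T (w : T -> R) (F G : T -> \bar R) x :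
  (forall i, (0 <= w i)%R) -> (forall i, 0 <= G i) -> (forall i, G i <= F i) ->
  (forall i, G i \is a fin_num) ->
  psum (fun i => (w i)%:E * G i) \is a fin_num -> (0 < w x)%R -> G x < F x ->
  psum (fun i => (w i)%:E * G i) < psum (fun i => (w i)%:E * F i).
Proof.
move=> w0 G0 GF Gf sf wx Gx.
have gap0 : 0 <= F x - G x by rewrite sube_ge0; [exact: ltW|by rewrite Gf].
pose gap i := if i == x then (w x)%:E * (F x - G x) else 0.
have gap_ge0 i : 0 <= gap i.
  by rewrite /gap; case: ifP => // _; apply: mule_ge0; rewrite ?lee_fin.
apply: (@lt_le_trans _ _ (psum (fun i => (w i)%:E * G i + gap i))).
  rewrite psumD //; last by move=> i; apply: mule_ge0; rewrite ?lee_fin.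
  have gap_off i : i <> x -> gap i = 0 by move=> /eqP/negPf; rewrite /gap => ->.
  rewrite (@psum_single _ gap x gap_off (gap_ge0 x)) /gap eqxx.
  by rewrite lteDl // mule_gt0 ?lte_fin // sube_gt0.
apply: le_psum => i; rewrite /gap; have [->|ix] := eqVneq i x.
  rewrite -muleDr //; last exact: fin_num_adde_defr.
  by rewrite addeC subeK.
by rewrite adde0; apply: lee_wpmul2l; rewrite ?lee_fin.
Qed.

Lemma nneseries_recl0 (f : nat -> \bar R) : (forall n, 0 <= f n) ->
  \sum_(t <oo) f t = f 0%N + \sum_(t <oo) f t.+1.
Proof.
move=> f0; rewrite (@nneseries_recl _ xpredT) // -nneseries_addn //.
by congr (_ + _); apply/congr_lim/funext => n; apply: eq_bigr => i _; rewrite addn1.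
Qed.

Lemma nneseries_le_ub (u : nat -> \bar R) M : (forall n, 0 <= u n) ->
  (forall n, \sum_(t < n) u t <= M) -> \sum_(t <oo) u t <= M.
Proof.
move=> u0 uM.
have nd := @ereal_nondecreasing_series R u xpredT 0%N (fun n _ _ => u0 n).
have /cvg_lim -> // := ereal_nondecreasing_cvgn nd.
by apply: ge_ereal_sup => _ [n _ <-] /=; rewrite big_mkord; exact: uM.
Qed.

End NonnegativeSums.
Section Trajectories.
Variables (R : realType) (S A : choiceType).
Variables (P : S -> A -> S -> R) (gamma : R) (s_tri : S).
Hypothesis P_ge0 : forall s a s', (0 <= P s a s')%R.
Hypothesis gamma_ge0 : (0 <= gamma)%R.
Implicit Types (pi : S -> A -> R) (s : S) (a : A) (d f h : S -> \bar R)
  (g : A -> \bar R) (t : nat).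

Definition stage_cost pi s := Epol pi s (fun a => (cost R s_tri s a)%:E).

Definition next_value pi f s := Epol pi s (fun a => Enext P s a f).

Definition cost_at pi d t := psum (fun s => stdist P pi d t s * stage_cost pi s).

Lemma cost_ge0 s a : (0 <= cost R s_tri s a)%R.
Proof. by rewrite /cost; case: ifP. Qed.

Lemma Epol_ge0 pi s g : (forall a, (0 <= pi s a)%R) -> (forall a, 0 <= g a) ->
  0 <= Epol pi s g.
Proof. by move=> h1 h2; apply: psum_ge0 => a; apply: mule_ge0; rewrite ?lee_fin. Qed.

Lemma Enext_ge0 s a f : (forall s, 0 <= f s) -> 0 <= Enext P s a f.
Proof. by move=> h; apply: psum_ge0 => s'; apply: mule_ge0; rewrite ?lee_fin. Qed.

Lemma Enext_le s a f h : (forall s, 0 <= f s) -> (forall s, f s <= h s) ->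
  Enext P s a f <= Enext P s a h.
Proof. by move=> f0 fh; apply: le_psum => s'; apply: lee_wpmul2l; rewrite ?lee_fin. Qed.

Lemma stage_cost_ge0 pi s : (forall a, (0 <= pi s a)%R) -> 0 <= stage_cost pi s.
Proof. by move=> h; apply: Epol_ge0 => // a; rewrite lee_fin cost_ge0. Qed.

Lemma next_value_ge0 pi f s : (forall a, (0 <= pi s a)%R) ->
  (forall s, 0 <= f s) -> 0 <= next_value pi f s.
Proof. by move=> h1 h2; apply: Epol_ge0 => // a; apply: Enext_ge0. Qed.

Lemma next_value_le pi s f h : (forall s a, (0 <= pi s a)%R) ->
  (forall s, 0 <= f s) -> (forall s, f s <= h s) ->
  next_value pi f s <= next_value pi h s.
Proof.
move=> p0 f0 fh; apply: le_psum => a; apply: lee_wpmul2l; rewrite ?lee_fin //.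
exact: Enext_le.
Qed.

Lemma Epol_point pi s a0 g : (forall a, pi s a = if a == a0 then 1%R else 0%R) ->
  0 <= g a0 -> Epol pi s g = g a0.
Proof.
move=> hpi g0; rewrite /Epol (@psum_single _ _ _ a0).
- by rewrite hpi eqxx mul1e.
- by move=> a /eqP/negPf an; rewrite hpi an mul0e.
- by rewrite hpi eqxx mul1e.
Qed.

Lemma stdist_ge0 pi d t s : (forall s a, (0 <= pi s a)%R) ->
  (forall s, 0 <= d s) -> 0 <= stdist P pi d t s.
Proof.
move=> h1 h2; elim: t s => //= t IH s'; apply: psum_ge0 => s.
by apply: mule_ge0 => //; apply: Epol_ge0 => // a; rewrite lee_fin.
Qed.

Lemma dirac_ge0 s0 s : 0 <= dirac_st R s0 s.
Proof. by rewrite /dirac_st; case: ifP. Qed.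

Lemma psum_dirac s0 h : 0 <= h s0 -> psum (fun s => dirac_st R s0 s * h s) = h s0.
Proof.
move=> h0; rewrite (@psum_single _ _ _ s0).
- by rewrite /dirac_st eqxx mul1e.
- by move=> s /eqP/negPf; rewrite /dirac_st => ->; rewrite mul0e.
- by rewrite /dirac_st eqxx mul1e.
Qed.

Lemma next_valueE pi s f : (forall a, (0 <= pi s a)%R) -> (forall s, 0 <= f s) ->
  psum (fun s' => Epol pi s (fun a => (P s a s')%:E) * f s') = next_value pi f s.
Proof.
move=> h1 h2; rewrite /next_value /Epol /Enext.
have term0 a s' : 0 <= (pi s a)%:E * ((P s a s')%:E * f s').
  by apply: mule_ge0; [rewrite lee_fin|apply: mule_ge0; rewrite ?lee_fin].
transitivity (psum (fun s' => psum (fun a => (pi s a)%:E * ((P s a s')%:E * f s')))).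
  apply: eq_esum => s' _; rewrite -psumZr//; last first.
    by move=> a; apply: mule_ge0; rewrite lee_fin.
  by apply: eq_esum => a _; rewrite muleA.
rewrite psum_swap //; apply: eq_esum => a _; rewrite psumZl ?lee_fin// => s'.
by apply: mule_ge0; rewrite ?lee_fin.
Qed.

Lemma stdist_succ_mean pi d f t : (forall s a, (0 <= pi s a)%R) ->
  (forall s, 0 <= d s) -> (forall s, 0 <= f s) ->
  psum (fun s' => stdist P pi d t.+1 s' * f s') =
  psum (fun s => stdist P pi d t s * next_value pi f s).
Proof.
move=> h1 h2 h3 /=.
have E0 s s' : 0 <= Epol pi s (fun a => (P s a s')%:E).
  by apply: Epol_ge0 => // a; rewrite lee_fin.
have st0 s : 0 <= stdist P pi d t s by exact: stdist_ge0.
transitivity (psum (fun s' => psum (fun s =>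
   stdist P pi d t s * (Epol pi s (fun a => (P s a s')%:E) * f s')))).
  apply: eq_esum => s' _; rewrite -psumZr//; last by move=> s; apply: mule_ge0.
  by apply: eq_esum => s _; rewrite muleA.
rewrite psum_swap; last by move=> s s'; apply: mule_ge0 => //; apply: mule_ge0.
apply: eq_esum => s _; rewrite psumZl//; last by move=> s'; apply: mule_ge0.
by rewrite next_valueE.
Qed.

Lemma stdist_mean_mix pi d t h : (forall s a, (0 <= pi s a)%R) ->
  (forall s, 0 <= d s) -> (forall s, 0 <= h s) ->
  psum (fun s => stdist P pi d t s * h s) =
  psum (fun s0 => d s0 * psum (fun s => stdist P pi (dirac_st R s0) t s * h s)).
Proof.
move=> p0 d0; elim: t h => [|t IH] h h0.
  by apply: eq_esum => s0 _ /=; rewrite psum_dirac.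
rewrite stdist_succ_mean// IH; last by move=> s; apply: next_value_ge0.
by apply: eq_esum => s0 _; rewrite stdist_succ_mean//; exact: dirac_ge0.
Qed.

Lemma stdist_shift pi d t : stdist P pi (stdist P pi d 1) t = stdist P pi d t.+1.
Proof. by elim: t => //= t ->. Qed.

Lemma stdist_pred pi d t s : (forall s a, (0 <= pi s a)%R) -> (forall s, 0 <= d s) ->
  0 < stdist P pi d t.+1 s -> exists s0 a,
  [/\ 0 < stdist P pi d t s0, (0 < pi s0 a)%R & (0 < P s0 a s)%R].
Proof.
move=> p0 d0 /=; have st0 x : 0 <= stdist P pi d t x by exact: stdist_ge0.
have pi0 x a : 0 <= (pi x a)%:E by rewrite lee_fin.
have Pe0 x a y : 0 <= (P x a y)%:E by rewrite lee_fin.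
have ep0 x : 0 <= Epol pi x (fun a => (P x a s)%:E) by exact: Epol_ge0.
move=> /(@psum_gt0 _ _ _ (fun x => mule_ge0 (st0 x) (ep0 x))) [s0].
rewrite mule_ge0_gt0 // => /andP[st_pos].
move=> /(@psum_gt0 _ _ _ (fun a => mule_ge0 (pi0 s0 a) (Pe0 s0 a s))) [a].
by rewrite mule_ge0_gt0 // !lte_fin => /andP[pa Pa]; exists s0, a.
Qed.

Lemma occupancy_pos pi (d0 : S -> R) s : (gamma < 1)%R ->
  (forall s a, (0 <= pi s a)%R) -> (forall s, (0 <= d0 s)%R) ->
  0 < occupancy P gamma pi d0 s ->
  exists t, (0 < gamma ^+ t)%R /\ 0 < stdist P pi (fun x => (d0 x)%:E) t s.
Proof.
move=> g1 p0 d00; rewrite /occupancy.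
have st0 t : 0 <= stdist P pi (fun x => (d0 x)%:E) t s.
  by apply: stdist_ge0 => // y; rewrite lee_fin.
have gt0 t : 0 <= (gamma ^+ t)%:E by rewrite lee_fin exprn_ge0.
have term0 t : 0 <= (gamma ^+ t)%:E * stdist P pi (fun x => (d0 x)%:E) t s.
  exact: mule_ge0.
have ser0 := @nneseries_ge0 R _ xpredT 0%N (fun n _ _ => term0 n).
rewrite (mule_ge0_gt0 _ ser0) ?lee_fin ?subr_ge0 ?ltW // => /andP[_].
rewrite nneseries_esumT // -/(psum _) => /(@psum_gt0 _ _ _ term0) [t].
by rewrite mule_ge0_gt0 // lte_fin => /andP[gpos spos]; exists t.
Qed.

Lemma cost_at_ge0 pi d t : (forall s a, (0 <= pi s a)%R) -> (forall s, 0 <= d s) ->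
  0 <= cost_at pi d t.
Proof.
move=> p0 d0; apply: psum_ge0 => s; apply: mule_ge0; first exact: stdist_ge0.
exact: stage_cost_ge0.
Qed.

Lemma VcostE pi d :
  Vcost P gamma s_tri pi d = \sum_(t <oo) ((gamma ^+ t)%:E * cost_at pi d t).
Proof. by []. Qed.

Lemma Vbar_ge0 pi s : (forall s a, (0 <= pi s a)%R) -> 0 <= Vbar P gamma s_tri pi s.
Proof.
move=> p0; rewrite /Vbar VcostE; apply: nneseries_ge0 => t _ _.
by apply: mule_ge0; [rewrite lee_fin exprn_ge0|apply: cost_at_ge0 => // ?; exact: dirac_ge0].
Qed.

Lemma Vcost_mix pi d : (forall s a, (0 <= pi s a)%R) -> (forall s, 0 <= d s) ->
  Vcost P gamma s_tri pi d = psum (fun s0 => d s0 * Vbar P gamma s_tri pi s0).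
Proof.
move=> p0 d0; have gt0 t : 0 <= (gamma ^+ t)%:E by rewrite lee_fin exprn_ge0.
have X0 s0 t : 0 <= cost_at pi (dirac_st R s0) t.
  by apply: cost_at_ge0 => // s; exact: dirac_ge0.
rewrite VcostE nneseries_esumT -/(psum _); last first.
  by move=> t; apply: mule_ge0 => //; apply: cost_at_ge0.
transitivity (psum (fun t => psum (fun s0 =>
   (gamma ^+ t)%:E * (d s0 * cost_at pi (dirac_st R s0) t)))).
  apply: eq_esum => t _; rewrite /cost_at stdist_mean_mix //; last first.
    by move=> s; exact: stage_cost_ge0.
  by rewrite psumZl // => s0; apply: mule_ge0 => //; exact: X0.
rewrite psum_swap; last by move=> t s0; apply: mule_ge0 => //; apply: mule_ge0.
apply: eq_esum => s0 _; rewrite /Vbar VcostE nneseries_esumT; last first.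
  by move=> t; apply: mule_ge0.
rewrite -/(psum _) -psumZl//; last by move=> t; apply: mule_ge0.
by apply: eq_esum => t _; rewrite muleCA.
Qed.

Lemma Vcost_unfold pi d : (forall s a, (0 <= pi s a)%R) -> (forall s, 0 <= d s) ->
  Vcost P gamma s_tri pi d =
  cost_at pi d 0 + gamma%:E * Vcost P gamma s_tri pi (stdist P pi d 1).
Proof.
move=> p0 d0; have d10 s : 0 <= stdist P pi d 1 s by exact: stdist_ge0.
rewrite !VcostE nneseries_recl0; last first.
  by move=> n; apply: mule_ge0; [rewrite lee_fin exprn_ge0|exact: cost_at_ge0].
rewrite expr0 mul1e -nneseriesZl; last first.
  by move=> n _; apply: mule_ge0; [rewrite lee_fin exprn_ge0|exact: cost_at_ge0].
congr (_ + _); apply: (@eq_eseriesr _ _ _ xpredT 0%N) => t _.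
by rewrite /cost_at stdist_shift muleA -EFinM exprS.
Qed.

Lemma Vbar_bellman pi s : (forall s a, (0 <= pi s a)%R) ->
  Vbar P gamma s_tri pi s =
  stage_cost pi s + gamma%:E * next_value pi (Vbar P gamma s_tri pi) s.
Proof.
move=> p0; have V0 x : 0 <= Vbar P gamma s_tri pi x by exact: Vbar_ge0.
rewrite {1}/Vbar Vcost_unfold//; last exact: dirac_ge0.
rewrite Vcost_mix//; last by move=> s'; apply: stdist_ge0 => // x; exact: dirac_ge0.
rewrite stdist_succ_mean//; last exact: dirac_ge0.
rewrite /cost_at /= !psum_dirac //; first exact: next_value_ge0.
exact: stage_cost_ge0.
Qed.

Lemma Qbar_ge0 pi s a : (forall s a, (0 <= pi s a)%R) ->
  0 <= Qbar P gamma s_tri pi s a.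
Proof.
move=> p0; apply: adde_ge0; first by rewrite lee_fin cost_ge0.
by apply: mule_ge0; [rewrite lee_fin|apply: Enext_ge0 => x; exact: Vbar_ge0].
Qed.

Section Supersolution.
Variables (pi : S -> A -> R) (f : S -> \bar R).
Hypothesis pi_ge0 : forall s a, (0 <= pi s a)%R.
Hypothesis f_ge0 : forall s, 0 <= f s.
Hypothesis f_super : forall s, stage_cost pi s + gamma%:E * next_value pi f s <= f s.

Lemma supersolution_step d : (forall s, 0 <= d s) ->
  cost_at pi d 0 + gamma%:E * psum (fun s => stdist P pi d 1 s * f s)
  <= psum (fun s => d s * f s).
Proof.
move=> d0; have g0 : 0 <= gamma%:E by rewrite lee_fin.
have K0 s : 0 <= next_value pi f s by exact: next_value_ge0.
rewrite stdist_succ_mean //= /cost_at /=.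
rewrite -psumZl //; last by move=> s; apply: mule_ge0.
rewrite -psumD; last 2 first.
- by move=> s; apply: mule_ge0 => //; apply: stage_cost_ge0.
- by move=> s; apply: mule_ge0 => //; apply: mule_ge0.
apply: le_psum => s; rewrite muleCA -ge0_muleDr; last 2 first.
- exact: stage_cost_ge0.
- exact: mule_ge0.
exact: lee_wpmul2l.
Qed.

Lemma supersolution_partial n d : (forall s, 0 <= d s) ->
  \sum_(t < n) ((gamma ^+ t)%:E * cost_at pi d t) +
    (gamma ^+ n)%:E * psum (fun s => stdist P pi d n s * f s)
  <= psum (fun s => d s * f s).
Proof.
have g0 : 0 <= gamma%:E by rewrite lee_fin.
have gexp0 t : 0 <= (gamma ^+ t)%:E by rewrite lee_fin exprn_ge0.
elim: n d => [|n IH] d d0; first by rewrite big_ord0 add0e expr0 mul1e.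
apply: le_trans (@supersolution_step d d0).
have d10 s : 0 <= stdist P pi d 1 s by apply: stdist_ge0.
have := IH _ d10; rewrite !stdist_shift => IHn.
rewrite big_ord_recl expr0 mul1e -addeA leeD2l //.
apply: le_trans (lee_wpmul2l g0 IHn).
rewrite ge0_muleDr; last 2 first.
- by apply: sume_ge0 => t _; apply: mule_ge0 => //; apply: cost_at_ge0.
- apply: mule_ge0 => //; apply: psum_ge0 => s; apply: mule_ge0 => //.
  exact: stdist_ge0.
rewrite ge0_sume_distrr; last by move=> t _; apply: mule_ge0 => //; apply: cost_at_ge0.
apply: leeD; last by rewrite muleA -EFinM exprS.
rewrite le_eqVlt; apply/orP; left; apply/eqP; apply: eq_bigr => t _.
by rewrite /cost_at /= stdist_shift muleA -EFinM exprS.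
Qed.

Lemma Vcost_le_supersolution d : (forall s, 0 <= d s) ->
  Vcost P gamma s_tri pi d <= psum (fun s => d s * f s).
Proof.
move=> d0; have gexp0 t : 0 <= (gamma ^+ t)%:E by rewrite lee_fin exprn_ge0.
rewrite VcostE; apply: nneseries_le_ub.
  by move=> t; apply: mule_ge0 => //; exact: cost_at_ge0.
move=> n; apply: le_trans (@supersolution_partial n d d0).
rewrite leeDl //; apply: mule_ge0 => //.
by apply: psum_ge0 => s; apply: mule_ge0 => //; exact: stdist_ge0.
Qed.

Lemma Vbar_le_supersolution s : Vbar P gamma s_tri pi s <= f s.
Proof. by have := @Vcost_le_supersolution (dirac_st R s) (dirac_ge0 s); rewrite psum_dirac. Qed.

End Supersolution.

Definition deviate (pistar : S -> A -> R) (s0 : S) (a0 : A) : S -> A -> R :=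
  fun s a => if s == s0 then (if a == a0 then 1 else 0)%R else pistar s a.

Lemma deviate_policy pistar s0 a0 : is_policy pistar ->
  is_policy (deviate pistar s0 a0).
Proof.
move=> pol s; rewrite /deviate; have [_|_] := eqVneq s s0; last exact: pol.
split=> [a|]; first by case: ifP.
rewrite (@psum_single _ _ (fun a => ((if a == a0 then 1 else 0)%R)%:E) a0) ?eqxx //.
by move=> a /eqP/negPf ->.
Qed.

(* Bellman optimality: for an optimal policy, V*(s) <= Q*(s,a) for every a;
   otherwise deviating to a at s would strictly lower the cost at s. *)
Lemma Vbar_le_Qbar pistar : optimal_policy P gamma s_tri pistar ->
  forall s0 a0, Vbar P gamma s_tri pistar s0 <= Qbar P gamma s_tri pistar s0 a0.
Proof.
move=> [pol opt] s0 a0.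
have p0 s a : (0 <= pistar s a)%R by have [] := pol s; move=> h _; exact: h.
set V := Vbar P gamma s_tri pistar; set Q0 := Qbar P gamma s_tri pistar s0 a0.
have V0 s : 0 <= V s by exact: Vbar_ge0.
rewrite leNgt; apply/negP => QV.
pose dev := deviate pistar s0 a0.
have devP : is_policy dev by exact: deviate_policy.
have dev0 s a : (0 <= dev s a)%R by have [] := devP s; move=> h _; exact: h.
pose f s := if s == s0 then Q0 else V s.
have fV s : f s <= V s by rewrite /f; case: ifP => // /eqP ->; exact: ltW.
have f0 s : 0 <= f s by rewrite /f; case: ifP => // _; exact: Qbar_ge0.
have f_super s : stage_cost dev s + gamma%:E * next_value dev f s <= f s.
  rewrite /f; have [->|ns] := eqVneq s s0.
    have dev_s0 a : dev s0 a = if a == a0 then 1%R else 0%R by rewrite /dev /deviate eqxx.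
    rewrite /stage_cost /next_value (@Epol_point dev s0 a0 _ dev_s0); last first.
      by rewrite lee_fin cost_ge0.
    rewrite (@Epol_point dev s0 a0 _ dev_s0); last exact: Enext_ge0.
    apply: leeD => //; apply: lee_wpmul2l; rewrite ?lee_fin //.
    exact: Enext_le.
  have devE g : Epol dev s g = Epol pistar s g by rewrite /Epol /dev /deviate (negPf ns).
  rewrite /stage_cost /next_value !devE -/(stage_cost pistar s).
  rewrite -/(next_value pistar f s) [X in _ <= X]/V Vbar_bellman //.
  apply: leeD => //; apply: lee_wpmul2l; first by rewrite lee_fin.
  exact: next_value_le.
have := @Vbar_le_supersolution dev f dev0 f0 f_super s0; rewrite /f eqxx => devQ.
by have := lt_le_trans QV (le_trans (opt dev devP s0) devQ); rewrite ltxx.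
Qed.

Section Shield.
Variables (s_circ : S) (d0 : S -> R) (pistar Qb mu pi : S -> A -> R).
Hypothesis gamma_lt1 : (gamma < 1)%R.
Hypothesis tri_neq_circ : s_tri <> s_circ.
Hypothesis P_tri : forall a, P s_tri a s_circ = 1%R.
Hypothesis P_circ : forall a, P s_circ a s_circ = 1%R.
Hypothesis P_kernel : is_kernel P.
Hypothesis d0_dist : is_dist d0.
Hypothesis pistar_opt : optimal_policy P gamma s_tri pistar.
Hypothesis G_in_G0 : in_G0 P gamma s_tri s_circ d0 pistar Qb mu.
Hypothesis pi_policy : is_policy pi.

Local Notation U := (Qmu s_tri s_circ Qb mu).
Local Notation V := (Vbar P gamma s_tri pistar).
Local Notation Qstar := (Qbar P gamma s_tri pistar).
Local Notation Qx := (Qext s_tri s_circ Qb).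
Local Notation pi' := (shield s_tri s_circ Qb mu 0%R pi).

Lemma mu_policy : is_policy mu. Proof. by have [] := G_in_G0. Qed.
Lemma mu_ge0 s a : (0 <= mu s a)%R. Proof. by have [] := mu_policy s. Qed.
Lemma mu_sum1 s : psum (fun a => (mu s a)%:E) = 1. Proof. by have [] := mu_policy s. Qed.
Lemma pistar_ge0 s a : (0 <= pistar s a)%R.
Proof. by have [pol _] := pistar_opt; have [] := pol s. Qed.
Lemma pistar_sum1 s : psum (fun a => (pistar s a)%:E) = 1.
Proof. by have [pol _] := pistar_opt; have [] := pol s. Qed.
Lemma Qb_admissible : admissible P gamma s_tri s_circ Qb mu.
Proof. by have [_ []] := G_in_G0. Qed.
Lemma pi_ge0 s a : (0 <= pi s a)%R. Proof. by have [] := pi_policy s. Qed.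
Lemma d0_ge0 s : (0 <= d0 s)%R. Proof. by have [] := d0_dist. Qed.

Lemma safe_cases s : [\/ safe s_tri s_circ s, s = s_tri | s = s_circ].
Proof.
have [->|nt] := eqVneq s s_tri; first exact: Or32.
have [->|nc] := eqVneq s s_circ; first exact: Or33.
by apply: Or31; split; apply/eqP.
Qed.

Lemma P_unsafe s a s' : (s = s_tri \/ s = s_circ) -> s' <> s_circ -> P s a s' = 0%R.
Proof.
move=> hs ns; have Pc : P s a s_circ = 1%R by case: hs => ->.
have Pe0 x : 0 <= (P s a x)%:E by rewrite lee_fin.
have := @psum_ge_pair _ _ (fun x => (P s a x)%:E) _ _ (nesym ns) Pe0.
rewrite (P_kernel s a).2 Pc -EFinD lee_fin => le1.
by apply/eqP; rewrite eq_le P_ge0 andbT; lra.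
Qed.

Lemma Enext_unsafe s a f : (s = s_tri \/ s = s_circ) -> 0 <= f s_circ ->
  Enext P s a f = f s_circ.
Proof.
move=> hs f0; rewrite /Enext (@psum_single _ _ _ s_circ).
- have -> : P s a s_circ = 1%R by case: hs => ->.
  by rewrite mul1e.
- by move=> x nx; rewrite P_unsafe // mul0e.
- by apply: mule_ge0 => //; rewrite lee_fin.
Qed.

(* Values of the extended Qb; it lies in [0,1] because Qb <= gamma < 1. *)
Lemma Qext_tri a : Qx s_tri a = 1%R. Proof. by rewrite /Qext eqxx. Qed.

Lemma Qext_circ a : Qx s_circ a = 0%R.
Proof. by rewrite /Qext eqxx; case: eqP => // /esym. Qed.

Lemma Qext_safe s a : safe s_tri s_circ s -> Qx s a = Qb s a.
Proof. by move=> [/eqP/negPf h1 /eqP/negPf h2]; rewrite /Qext h1 h2. Qed.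

Lemma Qext_ge0_le1 s a : (0 <= Qx s a <= 1)%R.
Proof.
have [hs|->|->] := safe_cases s; rewrite ?Qext_tri ?Qext_circ ?lexx ?ler01 //.
rewrite Qext_safe //; have [/andP[Qb0 Qbg] _] := Qb_admissible s a hs.
by rewrite Qb0 (le_trans Qbg) // ltW.
Qed.

Lemma U_ge0 s : 0 <= U s.
Proof.
apply: Epol_ge0 => a; first exact: mu_ge0.
by have /andP[Q0 _] := Qext_ge0_le1 s a; rewrite lee_fin.
Qed.

Lemma U_le1 s : U s <= 1.
Proof.
rewrite -(mu_sum1 s); apply: le_psum => a; rewrite -[X in _ <= X]mule1.
have /andP[_ Q1] := Qext_ge0_le1 s a.
by apply: lee_wpmul2l; rewrite ?lee_fin ?mu_ge0.
Qed.

Lemma U_circ : U s_circ = 0.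
Proof. by apply: psum_eq0 => a; rewrite Qext_circ mule0. Qed.

Lemma U_tri : U s_tri = 1.
Proof. by rewrite -(mu_sum1 s_tri); apply: eq_esum => a _; rewrite Qext_tri mule1. Qed.

Lemma U_admissible s a :
  (cost R s_tri s a)%:E + gamma%:E * Enext P s a U <= (Qx s a)%:E.
Proof.
have [hs|->|->] := safe_cases s.
- by rewrite Qext_safe //; have [_ h] := Qb_admissible s a hs.
- rewrite Enext_unsafe; [|by left|exact: U_ge0].
  by rewrite U_circ mule0 adde0 Qext_tri /cost eqxx.
- rewrite Enext_unsafe; [|by right|exact: U_ge0].
  rewrite U_circ mule0 adde0 Qext_circ /cost.
  by have /negPf -> : s_circ != s_tri by apply/eqP/nesym.
Qed.

(* Averaging admissibility over mu: U is a supersolution for mu. *)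
Lemma U_supersolution s : stage_cost mu s + gamma%:E * next_value mu U s <= U s.
Proof.
have g0 : 0 <= gamma%:E by rewrite lee_fin.
have EU0 a : 0 <= Enext P s a U by apply: Enext_ge0 => x; exact: U_ge0.
have mu0 a : 0 <= (mu s a)%:E by rewrite lee_fin mu_ge0.
rewrite /stage_cost /next_value /Epol -psumZl //; last by move=> a; apply: mule_ge0.
rewrite -psumD; last 2 first.
- by move=> a; apply: mule_ge0 => //; rewrite lee_fin cost_ge0.
- by move=> a; apply: mule_ge0 => //; apply: mule_ge0.
apply: le_psum => a; rewrite muleCA -ge0_muleDr ?lee_fin ?cost_ge0 ?mule_ge0 //.
by apply: lee_wpmul2l; [exact: mu0|exact: U_admissible].
Qed.

Lemma V_le_U s : V s <= U s.
Proof.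
have [_ opt] := pistar_opt; apply: le_trans (opt mu mu_policy s) _.
exact: (@Vbar_le_supersolution mu U mu_ge0 U_ge0 U_supersolution).
Qed.

Lemma V_ge0 s : 0 <= V s.
Proof. by apply: Vbar_ge0 => ? ?; exact: pistar_ge0. Qed.

Lemma V_le1 s : V s <= 1. Proof. exact: le_trans (V_le_U s) (U_le1 s). Qed.

Lemma V_fin s : V s \is a fin_num.
Proof. by rewrite ge0_fin_numE ?V_ge0 // (le_lt_trans (V_le1 s)) // ltry. Qed.

Lemma Qstar_le_Qb s a : safe s_tri s_circ s -> Qstar s a <= (Qb s a)%:E.
Proof.
move=> hs; have [_ adm] := Qb_admissible s a hs; apply: le_trans adm.
apply: leeD => //; apply: lee_wpmul2l; first by rewrite lee_fin.
by apply: Enext_le => x; [exact: V_ge0|exact: V_le_U].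
Qed.

Lemma V_le_Qb s a : safe s_tri s_circ s -> V s <= (Qb s a)%:E.
Proof. by move=> hs; apply: le_trans (Qstar_le_Qb s a hs); exact: Vbar_le_Qbar. Qed.

(* V*(s) <= Q*(s,pistar), by Bellman optimality averaged over pistar. *)
Lemma V_le_Qstar_pistar s : V s <= Epol pistar s (Qstar s).
Proof.
have ps0 a : 0 <= (pistar s a)%:E by rewrite lee_fin pistar_ge0.
rewrite -[X in X <= _]mul1e -(pistar_sum1 s) -psumZr //; last exact: V_ge0.
by apply: le_psum => a; apply: lee_wpmul2l => //; exact: Vbar_le_Qbar.
Qed.

Lemma shield_ge0 s a : (0 <= pi' s a)%R.
Proof.
rewrite /shield /=; apply: addr_ge0; first by case: ifP => _ //; exact: pi_ge0.
apply: mulr_ge0; last exact: mu_ge0.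
by apply: fine_ge0; apply: psum_ge0 => a'; case: ifP => _; rewrite lee_fin ?pi_ge0.
Qed.

(* Non-intervened actions have Qb <= U; an
   intervened action is played only through mu, and if it had Qb > V*, then
   (as Qb >= V* everywhere on s) the mu-average U(s) would exceed V*(s). *)
Lemma shield_action_le_V s a : safe s_tri s_circ s -> U s <= V s ->
  (0 < pi' s a)%R -> (Qb s a)%:E <= V s.
Proof.
move=> hs UV; rewrite /shield /=.
case: (asboolP (interv s_tri s_circ Qb mu 0 s a)) => [hint|nint]; last first.
  move=> _; apply: le_trans UV; rewrite -Qext_safe // -sube_le0 // leNgt.
  by apply/negP => gap; apply: nint.
rewrite add0r => w_mu_pos; have mu_pos : (0 < mu s a)%R.
  by rewrite lt_def mu_ge0 andbT; apply: contraTneq w_mu_pos => ->; rewrite mulr0 ltxx.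
rewrite leNgt; apply/negP => VQ.
have V_le_Qx a' : V s <= (Qx s a')%:E by rewrite Qext_safe //; exact: V_le_Qb.
have avgV : psum (fun i => (mu s i)%:E * V s) = V s.
  by rewrite psumZr ?mu_sum1 ?mul1e ?V_ge0 // => i; rewrite lee_fin mu_ge0.
have := @psum_avg_lt _ _ (mu s) (fun a => (Qx s a)%:E) (fun=> V s) a (mu_ge0 s)
  (fun=> V_ge0 s) V_le_Qx (fun=> V_fin s).
rewrite avgV Qext_safe // => /(_ (V_fin s) mu_pos VQ) VU.
by have := lt_le_trans VU UV; rewrite ltxx.
Qed.

(* U = V* on the support of d0, because E_d0 U = E_d0 V* and V* <= U. *)
Lemma initial_U_le_V s : (0 < d0 s)%R -> U s <= V s.
Proof.
move=> ds; rewrite leNgt; apply/negP => VU.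
have := @psum_avg_lt _ _ d0 U V s d0_ge0 V_ge0 V_le_U V_fin
  (@psum_avg_fin _ _ d0 V d0_ge0 d0_dist.2 V_ge0 V_le1) ds VU.
by have [_ [_ E]] := G_in_G0; rewrite /Edist in E; rewrite E ltxx.
Qed.

(* At a safe s0, Qb(s0,a) <= V*(s0) <= Q*(s0,a) sandwiches
   c + gamma E_P U <= c + gamma E_P V*, forcing U = V* wherever P(s0,a,.) > 0;
   unsafe states only lead to s_circ, where U = V* = 0. *)
Lemma step_U_le_V s0 a s : (0 < gamma)%R -> U s0 <= V s0 ->
  (0 < pi' s0 a)%R -> (0 < P s0 a s)%R -> U s <= V s.
Proof.
move=> gpos UV pa Pa.
have [hs|e|e] := safe_cases s0; last 2 first.
- suff -> : s = s_circ by rewrite U_circ V_ge0.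
  by apply: contrapT => ns; move: Pa; rewrite P_unsafe ?ltxx //; left.
- suff -> : s = s_circ by rewrite U_circ V_ge0.
  by apply: contrapT => ns; move: Pa; rewrite P_unsafe ?ltxx //; right.
rewrite leNgt; apply/negP => VU.
have avg_lt := @psum_avg_lt _ _ (P s0 a) U V s (P_ge0 s0 a) V_ge0 V_le_U V_fin
  (@psum_avg_fin _ _ (P s0 a) V (P_ge0 s0 a) (P_kernel s0 a).2 V_ge0 V_le1) Pa VU.
have [_ adm] := Qb_admissible s0 a hs.
have QV := le_trans adm (shield_action_le_V s0 a hs UV pa).
have := le_trans QV (@Vbar_le_Qbar pistar pistar_opt s0 a).
by rewrite /Qbar /Enext leNgt lteD2lE // lte_pmul2l ?lte_fin // avg_lt.
Qed.

Lemma reachable_U_le_V t s : (0 < gamma ^+ t)%R ->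
  0 < stdist P pi' (fun x => (d0 x)%:E) t s -> U s <= V s.
Proof.
have d0e x : 0 <= (d0 x)%:E by rewrite lee_fin d0_ge0.
elim: t s => [|t IH] s gt; first by rewrite lte_fin; exact: initial_U_le_V.
have gpos : (0 < gamma)%R.
  by rewrite lt_def gamma_ge0 andbT; apply: contraTneq gt => ->; rewrite expr0n ltxx.
move=> /(@stdist_pred pi' _ t s shield_ge0 d0e) [s0 [a [st pa Pa]]].
apply: (step_U_le_V s0 a s gpos _ pa Pa).
by apply: IH st; exact: exprn_gt0.
Qed.

Lemma occupied_U_le_V s : 0 < occupancy P gamma pi' d0 s -> U s <= V s.
Proof.
move=> /(@occupancy_pos pi' d0 s gamma_lt1 shield_ge0 d0_ge0) [t [gt st]].
exact: (reachable_U_le_V t s gt st).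
Qed.

Lemma Qstar_unsafe s a : (s = s_tri \/ s = s_circ) ->
  Epol pistar s (Qstar s) = Qstar s a.
Proof.
move=> hu; have Qa a' : Qstar s a' = Qstar s a.
  by rewrite /Qbar !Enext_unsafe ?V_ge0.
rewrite /Epol (_ : (fun a' => _) = fun a' => (pistar s a')%:E * Qstar s a).
  rewrite psumZr ?pistar_sum1 ?mul1e //; last by move=> i; rewrite lee_fin pistar_ge0.
  by apply: Qbar_ge0 => ? ?; exact: pistar_ge0.
by apply/funext => a'; rewrite Qa.
Qed.

(* Q* is finite at unsafe states (there it is cost + gamma V*(s_circ)). *)
Lemma Qstar_unsafe_fin s a : (s = s_tri \/ s = s_circ) -> Qstar s a \is a fin_num.
Proof. by move=> hu; rewrite /Qbar Enext_unsafe ?V_ge0 // fin_numD fin_numM ?V_fin. Qed.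

Lemma advantage_le s a : U s <= V s ->
  Qstar s a - Epol pistar s (Qstar s) <= (Qx s a)%:E - U s.
Proof.
move=> UV; have [hs|e|e] := safe_cases s.
- rewrite Qext_safe //; apply: leeB; first exact: Qstar_le_Qb.
  exact: le_trans UV (V_le_Qstar_pistar s).
all: have hu : s = s_tri \/ s = s_circ by [left|right].
all: rewrite (Qstar_unsafe s a hu) subee; last exact: Qstar_unsafe_fin.
- by rewrite e Qext_tri U_tri subee.
- by rewrite e Qext_circ U_circ subee.
Qed.

End Shield.

End Trajectories.

(* Theorem 6: under the shielded policy, for d^pi'-almost every state the
   advantage of G dominates the optimal advantage. *)
Theorem mainTheorem6 (R : realType) (S A : choiceType)
  (P : S -> A -> S -> R) (gamma : R) (d0 : S -> R) (s_tri s_circ : S)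
  (pistar : S -> A -> R) (Qb : S -> A -> R) (mu : S -> A -> R)
  (pi : S -> A -> R) :
  (0 <= gamma < 1)%R ->
  is_kernel P ->
  is_dist d0 ->
  s_tri <> s_circ ->
  (forall a, P s_tri a s_circ = 1%R) ->
  (forall a, P s_circ a s_circ = 1%R) ->
  d0 s_circ = 0%R ->
  optimal_policy P gamma s_tri pistar ->
  in_G0 P gamma s_tri s_circ d0 pistar Qb mu ->
  is_policy pi ->
  let pi' := shield s_tri s_circ Qb mu 0%R pi in
  let Qstar := Qbar P gamma s_tri pistar in
  let Astar := fun s a => Qstar s a - Epol pistar s (Qstar s) in
  let Abar := fun s a =>
    (Qext s_tri s_circ Qb s a)%:E - Qmu s_tri s_circ Qb mu s in
  forall s, 0 < occupancy P gamma pi' d0 s ->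
    forall a, Astar s a <= Abar s a.
Proof.
move=> /andP[gamma_ge0 gamma_lt1] P_kernel d0_dist tri_neq_circ P_tri P_circ _.
move=> pistar_opt G_in_G0 pi_policy pi' Qstar Astar Abar s s_occupied a.
have P_ge0 s1 a1 s' : (0 <= P s1 a1 s')%R by have [] := P_kernel s1 a1.
have U_le_V := @occupied_U_le_V R S A P gamma s_tri P_ge0 gamma_ge0 s_circ d0
  pistar Qb mu pi gamma_lt1 tri_neq_circ P_tri P_circ P_kernel d0_dist
  pistar_opt G_in_G0 pi_policy s s_occupied.
exact: (@advantage_le R S A P gamma s_tri P_ge0 gamma_ge0 s_circ d0 pistar Qb mu
  gamma_lt1 tri_neq_circ P_tri P_circ P_kernel pistar_opt G_in_G0 s a U_le_V).
Qed.
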